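(* For all $N,k^*\in\omega$ and every real $\epsilon>0$ there is $M\in\omega$ with the following property. For every FAM $\Xi$ and all sets $A_n\subseteq\omega$ ($n<N$) there is a nonempty finite $u\subseteq\omega$ with $|u|\le M$ and $\min(u)>k^*$ such that \[ \Xi(A_n)-\epsilon<\frac{|A_n\cap u|}{|u|}<\Xi(A_n)+\epsilon\qquad\text{for all }n<N . \]
   Context: A partial FAM (finitely additive measure) is a finitely additive probability measure $\Xi'$ defined on a Boolean subalgebra $\mathcal B$ of $\mathcal P(\omega)$ such that $\{n\}\in\mathcal B$ and $\Xi'(\{n\})=0$ for every $n\in\omega$. A FAM is a partial FAM whose domain is all of $\mathcal P(\omega)$. *)

(* real numbers. Subsets of omega are represented as
   characteristic functions nat -> bool (classically all of P(omega)). *)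
From Stdlib Require Import Reals List.
Open Scope R_scope.

Definition subset_nat := nat -> bool.

Definition disjointb (A B : subset_nat) : Prop := forall n, A n = false \/ B n = false.
Definition unionb (A B : subset_nat) : subset_nat := fun n => orb (A n) (B n).
Definition fullb : subset_nat := fun _ => true.
Definition singletonb (k : nat) : subset_nat := fun n => Nat.eqb n k.

Definition is_FAM (Xi : subset_nat -> R) : Prop :=
  (forall A B, (forall n, A n = B n) -> Xi A = Xi B) /\
  (forall A, 0 <= Xi A) /\
  Xi fullb = 1 /\
  (forall A B, disjointb A B -> Xi (unionb A B) = Xi A + Xi B) /\
  (forall k, Xi (singletonb k) = 0).

(* |A ∩ u| for a finite set u given as a duplicate-free list *)
Definition count_in (A : subset_nat) (u : list nat) : nat :=
  length (filter A u).

(* The N sets cut omega into at most K = 2^N atoms, and Xi assigns the atoms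
   weights p_j summing to 1.  Taking floor(L p_j) points above k* from each
   atom gives a sample u whose size and whose intersections with the A_n are
   within K of L and of L Xi(A_n); for L large compared with K / eps the
   relative frequencies are eps-close to the measures.  The points exist
   because an atom of positive measure is infinite: Xi vanishes on finite sets. *)

From Stdlib Require Import Reals List.
From Stdlib Require Import ZArith Lia Lra Classical.
Open Scope R_scope.

Fixpoint rsum (f : nat -> R) (K : nat) : R :=
  match K with O => 0 | S k => rsum f k + f k end.

Lemma rsum_scal a f K : rsum (fun j => a * f j) K = a * rsum f K.
Proof. induction K as [|K IH]; simpl; [ring | rewrite IH; ring]. Qed.

Lemma rsum_approx a b K : (forall j, a j - 1 < b j <= a j) ->
  rsum a K - INR K <= rsum b K <= rsum a K.
Proof.
  intros H; induction K as [|K IH]; simpl rsum; [simpl; lra|].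
  rewrite S_INR; specialize (H K); lra.
Qed.

Definition nat_floor (r : R) : nat := Z.to_nat (Int_part r).

Lemma nat_floor_spec r : 0 <= r -> r - 1 < INR (nat_floor r) <= r.
Proof.
  intros Hr; destruct (base_Int_part r) as [Hle Hgt].
  assert (Hnneg : (-1 < Int_part r)%Z) by (apply lt_IZR; lra).
  unfold nat_floor; rewrite INR_IZR_INZ, Z2Nat.id by lia; lra.
Qed.

Lemma filter_const (f : nat -> bool) b l : (forall x, In x l -> f x = b) ->
  filter f l = if b then l else nil.
Proof.
  induction l as [|a l IH]; intros H; [now destruct b|].
  simpl; rewrite (H a (or_introl eq_refl)), IH by (intros; apply H; now right).
  now destruct b.
Qed.

Lemma count_in_app A u v : count_in A (u ++ v) = (count_in A u + count_in A v)%nat.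
Proof. unfold count_in; now rewrite filter_app, length_app. Qed.

Definition cell (c : nat -> nat) (j : nat) : subset_nat := fun x => Nat.eqb (c x) j.

Section FAM.

Variable Xi : subset_nat -> R.
Hypothesis HXi : is_FAM Xi.

Lemma FAM_ext A B : (forall n, A n = B n) -> Xi A = Xi B.
Proof. apply HXi. Qed.

Lemma FAM_ge0 A : 0 <= Xi A.
Proof. apply HXi. Qed.

Lemma FAM_full : Xi fullb = 1.
Proof. apply HXi. Qed.

Lemma FAM_add A B : disjointb A B -> Xi (unionb A B) = Xi A + Xi B.
Proof. apply HXi. Qed.

Lemma FAM_singleton k : Xi (singletonb k) = 0.
Proof. apply HXi. Qed.

Lemma FAM_split A P :
  Xi A = Xi (fun x => A x && P x)%bool + Xi (fun x => A x && negb (P x))%bool.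
Proof.
  rewrite <- FAM_add.
  - apply FAM_ext; intro n; unfold unionb; now destruct (A n), (P n).
  - intro n; destruct (A n), (P n); simpl; auto.
Qed.

Lemma FAM_mono A B : (forall x, A x = true -> B x = true) -> Xi A <= Xi B.
Proof.
  intros HAB; rewrite (FAM_split B A).
  assert (E : Xi (fun x => B x && A x)%bool = Xi A).
  { apply FAM_ext; intro n; specialize (HAB n); destruct (A n), (B n); auto. }
  pose proof (FAM_ge0 (fun x => B x && negb (A x))%bool); lra.
Qed.

Lemma FAM_empty A : (forall x, A x = false) -> Xi A = 0.
Proof.
  intros HA; pose proof (FAM_split A A) as Hsplit.
  assert (E : forall P, Xi (fun x => A x && P x)%bool = Xi A)
    by (intro P; apply FAM_ext; intro n; now rewrite HA).
  rewrite !E in Hsplit; lra.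
Qed.

Lemma FAM_bounded b A : (forall x, A x = true -> (x < b)%nat) -> Xi A = 0.
Proof.
  revert A; induction b as [|b IH]; intros A HA.
  - apply FAM_empty; intro x; destruct (A x) eqn:E; auto; apply HA in E; lia.
  - rewrite (FAM_split A (fun x => Nat.eqb x b)), (IH (fun x => A x && negb (x =? b))%nat%bool).
    + assert (Hb : Xi (fun x => A x && (x =? b))%nat%bool <= Xi (singletonb b)).
      { apply FAM_mono; intros x Hx; apply andb_prop in Hx; apply Hx. }
      rewrite FAM_singleton in Hb.
      pose proof (FAM_ge0 (fun x => A x && (x =? b))%nat%bool); lra.
    + intros x Hx; apply andb_prop in Hx as [Hx Hneq].
      apply Bool.negb_true_iff, Nat.eqb_neq in Hneq; apply HA in Hx; lia.
Qed.

Lemma FAM_pos_unbounded A : 0 < Xi A -> forall b, exists x, (b < x)%nat /\ A x = true.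
Proof.
  intros Hpos b; apply NNPP; intro Hnone.
  enough (Xi A = 0) by lra.
  apply (FAM_bounded (S b)); intros x Hx.
  destruct (Nat.lt_ge_cases b x); [|lia].
  exfalso; apply Hnone; now exists x.
Qed.

Lemma FAM_partition c K (h : nat -> bool) : (forall x, (c x < K)%nat) ->
  Xi (fun x => h (c x)) = rsum (fun j => if h j then Xi (cell c j) else 0) K.
Proof.
  intros Hc.
  assert (Hprefix : forall K', Xi (fun x => h (c x) && (c x <? K'))%nat%bool
     = rsum (fun j => if h j then Xi (cell c j) else 0) K').
  { induction K' as [|K' IH]; simpl rsum.
    - apply FAM_empty; intro x; now destruct (h (c x)).
    - rewrite <- IH, (FAM_split _ (fun x => c x <? K')%nat).
      f_equal; [apply FAM_ext; intro x|].
      + destruct (Nat.ltb_spec (c x) (S K')), (Nat.ltb_spec (c x) K');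
          destruct (h (c x)); simpl; auto; lia.
      + destruct (h K') eqn:HK; [apply FAM_ext | apply FAM_empty]; intro x;
          unfold cell; destruct (Nat.ltb_spec (c x) (S K')),
            (Nat.ltb_spec (c x) K'), (Nat.eqb_spec (c x) K');
          subst; try rewrite HK; destruct (h (c x)); simpl; auto; lia. }
  rewrite <- Hprefix; apply FAM_ext; intro x.
  destruct (Nat.ltb_spec (c x) K); [now destruct (h (c x)) | specialize (Hc x); lia].
Qed.

End FAM.

Lemma unbounded_NoDup_list (P : nat -> bool) (kstar m : nat) :
  (forall b, exists x, (b < x)%nat /\ P x = true) ->
  exists l, NoDup l /\ length l = m /\ forall x, In x l -> (kstar < x)%nat /\ P x = true.
Proof.
  intros HP.
  enough (exists l B, NoDup l /\ length l = m /\
            forall x, In x l -> (kstar < x <= B)%nat /\ P x = true)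
    as (l & B & Hnd & Hlen & Hl)
    by (exists l; split; [|split]; auto; intros x Hx; apply Hl in Hx; split; [lia | tauto]).
  induction m as [|m (l & B & Hnd & Hlen & Hl)].
  - exists nil, O; split; [constructor | split; [reflexivity | intros x []]].
  - destruct (HP (B + kstar)%nat) as (y & Hy & Py).
    exists (y :: l), y; split; [|split].
    + constructor; auto; intro Hin; apply Hl in Hin; lia.
    + simpl; lia.
    + intros x [<- | Hin]; [split; [lia | exact Py]|].
      apply Hl in Hin; split; [lia | tauto].
Qed.

Lemma sample_with_cell_counts (c m : nat -> nat) (kstar K : nat) :
  (forall j, m j <> O -> forall b, exists x, (b < x)%nat /\ cell c j x = true) ->
  exists u, NoDup u /\ (forall x, In x u -> (kstar < x)%nat /\ (c x < K)%nat) /\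
    forall h : nat -> bool,
      INR (count_in (fun x => h (c x)) u) = rsum (fun j => if h j then INR (m j) else 0) K.
Proof.
  intros Hunb; induction K as [|K (u & Hnd & Hin & Hcount)].
  - exists nil; split; [constructor | split; [intros x [] | reflexivity]].
  - destruct (Nat.eq_dec (m K) O) as [Hzero | Hnz].
    + exists u; split; [exact Hnd | split; [intros x Hx; apply Hin in Hx; lia|]].
      intro h; simpl rsum; rewrite Hcount, Hzero; destruct (h K); simpl; ring.
    + destruct (unbounded_NoDup_list (cell c K) kstar (m K) (Hunb K Hnz))
        as (l & Hndl & Hlen & Hl).
      assert (HcK : forall x, In x l -> c x = K)
        by (intros x Hx; apply Hl in Hx as [_ Hx]; now apply Nat.eqb_eq).
      exists (u ++ l); split; [|split].
      * apply NoDup_app; auto; intros a Ha Hb.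
        apply Hin in Ha; apply HcK in Hb; lia.
      * intros x Hx; apply in_app_or in Hx as [Hx | Hx].
        -- apply Hin in Hx; lia.
        -- split; [now apply Hl | apply HcK in Hx; lia].
      * intro h; rewrite count_in_app, plus_INR, Hcount; simpl rsum; f_equal.
        unfold count_in; rewrite (filter_const _ (h K))
          by (intros x Hx; now rewrite HcK).
        destruct (h K); simpl; auto; now rewrite Hlen.
Qed.

Lemma FAM_sample Xi (c : nat -> nat) (K L kstar : nat) :
  is_FAM Xi -> (forall x, (c x < K)%nat) ->
  exists u, NoDup u /\ (forall x, In x u -> (kstar < x)%nat) /\
    forall h : nat -> bool,
      INR L * Xi (fun x => h (c x)) - INR K <= INR (count_in (fun x => h (c x)) u)
      <= INR L * Xi (fun x => h (c x)).
Proof.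
  intros HXi Hc.
  set (m := fun j => nat_floor (INR L * Xi (cell c j))).
  assert (Hm : forall j, INR L * Xi (cell c j) - 1 < INR (m j) <= INR L * Xi (cell c j))
    by (intro j; apply nat_floor_spec, Rmult_le_pos; [apply pos_INR | now apply FAM_ge0]).
  destruct (sample_with_cell_counts c m kstar K) as (u & Hnd & Hin & Hcount).
  { intros j Hj; apply FAM_pos_unbounded with (Xi := Xi); auto.
    specialize (Hm j); destruct (m j) as [|k]; [easy|].
    rewrite S_INR in Hm; pose proof (pos_INR k); pose proof (pos_INR L); nra. }
  exists u; split; [exact Hnd | split; [intros x Hx; apply Hin in Hx; lia|]].
  intro h; rewrite Hcount, (FAM_partition Xi HXi c K h Hc), <- rsum_scal.
  apply rsum_approx; intro j; specialize (Hm j); destruct (h j); simpl; lra.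
Qed.

Lemma finite_family_coding N (A : nat -> subset_nat) :
  exists (c : nat -> nat) (g : nat -> nat -> bool),
    (forall x, (c x < 2 ^ N)%nat) /\ forall n x, (n < N)%nat -> A n x = g n (c x).
Proof.
  induction N as [|N (c & g & Hc & Hg)].
  - exists (fun _ => O), (fun _ _ => true); split; intros; simpl; lia.
  - exists (fun x => (2 * c x + (if A N x then 1 else 0))%nat),
      (fun n j => if Nat.eqb n N then Nat.odd j else g n (Nat.div2 j)).
    split.
    + intro x; specialize (Hc x); rewrite Nat.pow_succ_r'; destruct (A N x); lia.
    + intros n x Hn; destruct (Nat.eqb_spec n N) as [-> | Hne].
      * destruct (A N x); [now rewrite Nat.odd_odd | now rewrite Nat.add_0_r, Nat.odd_even].
      * rewrite Hg by lia; f_equal; destruct (A N x);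
          [now rewrite Nat.div2_odd' | now rewrite Nat.add_0_r, Nat.div2_double].
Qed.

Lemma ratio_approx (L K T S P eps : R) : 0 < eps -> 0 <= K -> 0 <= P <= 1 ->
  K < eps * (L - K) -> P * L - K <= T <= P * L -> L - K <= S <= L ->
  P - eps < T / S < P + eps.
Proof.
  intros Heps HK HP Hgap HT HS.
  assert (HLK : 0 < L - K) by nra.
  assert (HSpos : 0 < S) by lra.
  split; apply (Rmult_lt_reg_r S); auto; unfold Rdiv;
    rewrite Rmult_assoc, Rinv_l, Rmult_1_r by lra; nra.
Qed.

Theorem lemma1 :
  forall (N kstar : nat) (eps : R), 0 < eps ->
  exists M : nat,
    forall (Xi : subset_nat -> R) (A : nat -> subset_nat),
      is_FAM Xi ->
      exists u : list nat,
        NoDup u /\ u <> nil /\ (length u <= M)%nat /\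
        (forall x, In x u -> (kstar < x)%nat) /\
        (forall n, (n < N)%nat ->
           Xi (A n) - eps < INR (count_in (A n) u) / INR (length u) /\
           INR (count_in (A n) u) / INR (length u) < Xi (A n) + eps).
Proof.
  intros N kstar eps Heps.
  set (K := (2 ^ N)%nat).
  pose proof (pos_INR K) as HK.
  destruct (INR_archimed eps (INR K * (1 + eps)) Heps) as [L HL].
  exists L; intros Xi A HXi.
  destruct (finite_family_coding N A) as (c & g & Hc & Hg).
  destruct (FAM_sample Xi c K L kstar HXi Hc) as (u & Hnd & Hin & Hcount).
  assert (Hlen : INR L - INR K <= INR (length u) <= INR L).
  { specialize (Hcount (fun _ => true)); unfold count_in in Hcount.
    rewrite filter_true, (FAM_ext Xi HXi _ fullb), FAM_full in Hcount by easy; lra. }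
  exists u; split; [exact Hnd | split; [|split; [|split]]]; auto.
  - intros ->; simpl in Hlen; nra.
  - apply INR_le; lra.
  - intros n Hn.
    specialize (Hcount (g n)).
    rewrite (FAM_ext Xi HXi _ (A n)) in Hcount by (intro; symmetry; now apply Hg).
    replace (count_in (fun x => g n (c x)) u) with (count_in (A n) u) in Hcount
      by (unfold count_in; f_equal; apply filter_ext; intro; now apply Hg).
    apply (ratio_approx (INR L) (INR K)); auto; try lra.
    split; [now apply FAM_ge0|].
    rewrite <- (FAM_full Xi HXi); apply FAM_mono; auto.
Qed.
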